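(* Let $N\ge 2$ and $x=(x_1,\dots,x_{2N})\in(\mathbb{R}_{>0})^{2N}$. Put $H_0(x)=0$ and, for $1\le k\le N$, $$H_k(x)=\min_{\substack{1\le i_1\triangleleft i_2\triangleleft\cdots\triangleleft i_k\le 2N\\ (i_1,i_k)\neq(1,2N)}}\big(x_{i_1}+x_{i_2}+\cdots+x_{i_k}\big).$$ Then $H_k(x)+H_{k+2}(x)\ge 2H_{k+1}(x)$ for all $0\le k\le N-2$.
   Context: For integers $i,j$, $i\triangleleft j$ means $i+1<j$. The minimum runs over index tuples $1\le i_1<\dots<i_k\le 2N$ with consecutive indices differing by at least $2$, excluding tuples with $i_1=1$ and $i_k=2N$ simultaneously. *)

From HB Require Import structures.
From mathcomp Require Import all_boot all_order all_algebra.
Set Implicit Arguments. Unset Strict Implicit. Unset Printing Implicit Defensive.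
Import Order.TTheory GRing.Theory Num.Theory.
Local Open Scope ring_scope.

(* Indices are 0-based: position i : 'I_(2N) stands for the paper's index i+1.
   An index tuple 1 <= i_1 < ... < i_k <= 2N with consecutive differences >= 2
   is identified with the set S = {i_1,...,i_k} of its entries. *)

Definition admissible (n k : nat) (A : {set 'I_n}) : bool :=
  [&& #|A| == k,
      [forall i : 'I_n, forall j : 'I_n,
          ((i \in A) && (j \in A)) ==> ((val i).+1 != val j)]
    & ~~ ([exists i in A, val i == 0%N] && [exists j in A, val j == n.-1])].

Definition seqmin (R : realDomainType) (l : seq R) : R :=
  \big[Order.min/head 0 l]_(v <- l) v.

Definition H (R : realDomainType) (N : nat) (x : 'I_(2 * N) -> R) (k : nat) : R :=
  if k == 0%N then 0
  else seqmin (map (fun A : {set 'I_(2 * N)} => \sum_(i in A) x i)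
                 (enum [set A : {set 'I_(2 * N)} | admissible k A])).

From HB Require Import structures.
From mathcomp Require Import all_boot all_order all_algebra.
From mathcomp Require Import zify.
Import Order.TTheory GRing.Theory Num.Theory.

Set Implicit Arguments.
Unset Strict Implicit.
Unset Printing Implicit Defensive.

(* Admissible index sets are exactly the independent k-sets of the cycle
   C_{2N} (positions 2N and 1 are adjacent), so H_k(x) is the least weight of
   such a set.  The inequality follows from an exchange lemma: for independent
   sets A, B with |B| = |A| + 2 there are independent C, D with
   |C| = |D| = |A| + 1 and C + D = A + B as multisets; then
   H_k + H_{k+2} = w(A) + w(B) = w(C) + w(D) >= 2 H_{k+1}.
   The exchange lemma is proved for n-periodic 0/1 words on nat.  Each run of
   A u B between two gaps has B-excess at most one (run_excess); since the
   total excess is two, after rotating a gap to the seam some gap-bounded run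
   has excess exactly one (segment_exchange), and swapping A and B on it gives
   C and D.  Without any gap A and B alternate, so |A| = |B|. *)

Definition periodic (n : nat) (f : nat -> bool) := forall m, f (m + n) = f m.

(* No two consecutive letters are set; for a periodic word this includes the
   pair (n-1, n), i.e. the cyclic adjacency. *)
Definition indep (f : nat -> bool) := forall m, ~~ (f m && f m.+1).

Definition cycle_indep n (f : nat -> bool) := periodic n f /\ indep f.

Definition occ (f : nat -> bool) (s t : nat) : nat := \sum_(s <= m < t) f m.

Lemma occ_cat f s u t : s <= u <= t -> occ f s t = occ f s u + occ f u t.
Proof. by case/andP=> su ut; rewrite /occ -big_cat_nat. Qed.

Lemma occ_add (a b c d : nat -> bool) s t : (forall m, c m + d m = a m + b m) ->
  occ c s t + occ d s t = occ a s t + occ b s t.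
Proof. by move=> h; rewrite /occ -!big_split; apply: eq_bigr => m _; apply: h. Qed.

Lemma periodic_addM n f : periodic n f -> forall q m, f (m + q * n) = f m.
Proof.
move=> pf; elim=> [|q IH] m; first by rewrite mul0n addn0.
by rewrite mulSn addnCA addnC pf IH.
Qed.

Lemma periodic_mod n f : periodic n f -> forall m, f (m %% n) = f m.
Proof. by move=> pf m; rewrite [in RHS](divn_eq m n) addnC periodic_addM. Qed.

Lemma periodic_succ_mod n f : periodic n f -> forall m, f (m %% n).+1 = f m.+1.
Proof.
move=> pf m; rewrite -(periodic_mod pf m.+1) -(periodic_mod pf (_).+1).
by rewrite -addn1 modnDml addn1.
Qed.

Lemma occ_shift n f : periodic n f -> forall s, occ (fun m => f (m + s)) 0 n = occ f 0 n.
Proof.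
move=> pf; elim=> [|s IH]; first by apply: eq_bigr => m _; rewrite addn0.
rewrite -IH /occ; case: n pf {IH} => [|n] pf; first by rewrite !big_geq.
rewrite big_nat_recr // [in RHS]big_nat_recl //= addnS -addSn (addnC n.+1) pf add0n addnC.
by congr (_ + _); apply: eq_bigr => m _; rewrite addnS addSn.
Qed.

Lemma shift_cycle_indep n f s : cycle_indep n f -> cycle_indep n (fun m => f (m + s)).
Proof. by case=> pf if_; split=> m; [rewrite addnAC pf | rewrite addSn; exact: if_]. Qed.

Definition gap (a b : nat -> bool) (m : nat) := ~~ ((a m || b m) && (a m.+1 || b m.+1)).

Lemma gap_sym a b m : gap b a m = gap a b m.
Proof. by rewrite /gap orbC [b m.+1 || _]orbC. Qed.

(* On a run [s, t) of the union (no gap inside), b exceeds a by at most one.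
   The invariant carried along the run is occ b + a(last) <= occ a + 1. *)
Lemma run_excess (a b : nat -> bool) s t : indep b -> s < t ->
  (forall m, s <= m -> m.+1 < t -> ~~ gap a b m) -> occ b s t <= (occ a s t).+1.
Proof.
move=> ib lt_st run.
suff inv j : s + j < t -> occ b s (s + j).+1 + a (s + j) <= (occ a s (s + j).+1).+1.
  have e : (s + (t.-1 - s)).+1 = t by lia.
  by move: (inv (t.-1 - s)); rewrite e; lia.
elim: j => [|j IH] lt_jt.
  by rewrite /occ addn0 !big_nat1; case: (a s); case: (b s).
have lt_j : s + j < t by lia.
rewrite /occ !(big_nat_recr (s + j.+1)) ?leq_addr //= addnS.
have := IH lt_j; have := ib (s + j); have := run (s + j) (leq_addr _ _).
rewrite /gap /occ -addnS => /(_ lt_jt); rewrite negbK addnS.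
move: (\sum_(_ <= _ < _) a _) (\sum_(_ <= _ < _) b _) => A B.
by case: (a _); case: (b _); case: (a _); case: (b _) => /=; lia.
Qed.

(* If the union has no gap on the whole cycle, a and b alternate
   (b m = a (m + 1)), hence have the same number of set letters. *)
Lemma no_gap_balanced n a b : periodic n a -> indep a -> indep b ->
  (forall m, m < n -> ~~ gap a b m) -> occ a 0 n = occ b 0 n.
Proof.
move=> pa ia ib ngap.
have ba m : m < n -> b m = a m.+1.
  move=> /ngap; rewrite /gap negbK; move: (ia m) (ib m).
  by case: (a m); case: (b m); case: (a m.+1); case: (b m.+1).
by rewrite -(occ_shift pa 1); apply: eq_big_nat => m /andP[_ /ba ->]; rewrite addn1.
Qed.

Definition cut n (a b : nat -> bool) t := [|| t == 0, t == n | gap a b t.-1].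

(* If b exceeds a by two on [0, n), some segment between two cut points has
   excess exactly one: take t2 the least cut point with positive excess on
   [0, t2), and t1 the last cut point before it; [t1, t2) is a run. *)
Lemma segment_exchange n (a b : nat -> bool) : indep b -> occ b 0 n = occ a 0 n + 2 ->
  exists t1 t2, [/\ t1 < t2 <= n, cut n a b t1, cut n a b t2
                  & occ b t1 t2 = (occ a t1 t2).+1].
Proof.
move=> ib hn.
have exP : exists t, cut n a b t && (occ a 0 t < occ b 0 t).
  by exists n; rewrite /cut eqxx orbT hn; lia.
case: (ex_minnP exP) => t2 /andP[cut2 exc2] min2.
have le2 : t2 <= n by apply: min2; rewrite /cut eqxx orbT hn; lia.
have exQ : exists t, cut n a b t && (t < t2).
  exists 0; rewrite /cut eqxx lt0n; apply: contraTneq exc2 => ->.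
  by rewrite /occ !big_geq.
have ubQ t : cut n a b t && (t < t2) -> t <= t2 by case/andP=> _ /ltnW.
case: (ex_maxnP exQ ubQ) => t1 /andP[cut1 lt12] max1.
have le1 : occ b 0 t1 <= occ a 0 t1.
  by rewrite leqNgt; apply/negP => exc1; have := min2 t1; rewrite cut1 exc1; lia.
have run m : t1 <= m -> m.+1 < t2 -> ~~ gap a b m.
  move=> h1 h2; apply/negP => g.
  by have := max1 m.+1; rewrite /cut g !orbT h2 => /(_ isT); lia.
have s12 : 0 <= t1 <= t2 by rewrite leq0n ltnW.
have := run_excess ib lt12 run.
rewrite (occ_cat a s12) (occ_cat b s12) in exc2.
by exists t1, t2; split; rewrite ?lt12 //; lia.
Qed.

Definition mix (P a b : nat -> bool) (m : nat) := if P m then b m else a m.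

Lemma mix_add P a b m : mix P a b m + mix P b a m = a m + b m.
Proof. by rewrite /mix; case: (P m); rewrite // addnC. Qed.

Lemma mix_indep P a b : indep a -> indep b ->
  (forall m, P m != P m.+1 -> gap a b m) -> indep (mix P a b).
Proof.
move=> ia ib hP m; rewrite /mix; case: (eqVneq (P m) (P m.+1)) => [<-|/hP].
  by case: (P m); [exact: ib | exact: ia].
by rewrite /gap; case: (P m); case: (P m.+1); case: (a m); case: (b m);
  case: (a m.+1); case: (b m.+1).
Qed.

Lemma occ_mix P a b n t1 t2 : t1 <= t2 <= n -> (forall m, m < n -> P m = (t1 <= m < t2)) ->
  occ (mix P a b) 0 n + occ a t1 t2 = occ a 0 n + occ b t1 t2.
Proof.
move=> s2 hP; have s1 : 0 <= t1 <= n by lia.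
rewrite !(occ_cat _ s1) !(occ_cat _ s2).
have mixE s t g : s <= t <= n -> (forall m, s <= m < t -> P m = g) ->
    occ (mix P a b) s t = occ (if g then b else a) s t.
  move=> /andP[_ le_tn] hg; apply: eq_big_nat => m /andP[hs ht].
  by rewrite /mix hg ?hs //; case: g {hg}.
rewrite (mixE 0 t1 false) ?(mixE t1 t2 true) ?(mixE t2 n false) //; try lia.
all: by move=> m hm; rewrite hP; lia.
Qed.

Definition inseg n t1 t2 m := t1 <= m %% n < t2.

Lemma inseg_gap n a b (t1 t2 : nat) : 0 < n -> periodic n a -> periodic n b ->
  gap a b n.-1 -> t2 <= n -> cut n a b t1 -> cut n a b t2 ->
  forall m, inseg n t1 t2 m != inseg n t1 t2 m.+1 -> gap a b m.
Proof.
move=> n_gt0 pa pb gn le2n c1 c2 m.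
have gap_mod : gap a b (m %% n) = gap a b m.
  by rewrite /gap !(periodic_mod pa) !(periodic_mod pb) !(periodic_succ_mod pa)
    !(periodic_succ_mod pb).
rewrite /inseg -gap_mod.
have -> : m.+1 %% n = (m %% n).+1 %% n by rewrite -addn1 -modnDml addn1.
have := ltn_pmod m n_gt0; move: (m %% n) => u.
rewrite leq_eqVlt => /orP[/eqP un | ltun]; first by rewrite -un /= in gn.
rewrite modn_small // => hdiff.
have /orP[/eqP e | /eqP e] : (u.+1 == t1) || (u.+1 == t2) by move: hdiff; lia.
  by move: c1; rewrite /cut -e /= ltn_eqF.
by move: c2; rewrite /cut -e /= ltn_eqF.
Qed.

Definition exchangeable n (a b : nat -> bool) := exists c d : nat -> bool,
  [/\ cycle_indep n c, cycle_indep n d,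
       forall m, c m + d m = a m + b m & occ c 0 n = (occ a 0 n).+1].

(* Exchange when the union has a gap at the seam: swap on a segment of
   excess one given by segment_exchange. *)
Lemma exchange_at_gap n a b : 0 < n -> cycle_indep n a -> cycle_indep n b ->
  gap a b n.-1 -> occ b 0 n = occ a 0 n + 2 -> exchangeable n a b.
Proof.
move=> n_gt0 [pa ia] [pb ib] gn hn.
have [t1 [t2 [/andP[lt12 le2n] c1 c2 exc]]] := segment_exchange ib hn.
pose P := inseg n t1 t2.
have bdry := inseg_gap n_gt0 pa pb gn le2n c1 c2.
have per_mix f g : periodic n f -> periodic n g -> periodic n (mix P f g).
  by move=> pf pg m; rewrite /mix /P /inseg modnDr pf pg.
exists (mix P a b), (mix P b a); split.
- by split; [exact: per_mix | exact: mix_indep].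
- by split; [exact: per_mix | apply: mix_indep => // m /bdry; rewrite gap_sym].
- exact: mix_add.
- have s12 : t1 <= t2 <= n by rewrite ltnW.
  have Pin m : m < n -> P m = (t1 <= m < t2) by move=> lt_mn; rewrite /P /inseg modn_small.
  by have := occ_mix a b s12 Pin; rewrite exc; lia.
Qed.

Lemma exchangeable_rot n a b r : 0 < n -> periodic n a -> periodic n b ->
  exchangeable n (fun m => a (m + r)) (fun m => b (m + r)) -> exchangeable n a b.
Proof.
move=> n_gt0 pa pb [c [d [ic id cd oc]]].
pose s := r * n.-1.
have es m : m + s + r = m + r * n by rewrite -addnA -mulnSr prednK.
exists (fun m => c (m + s)), (fun m => d (m + s)); split; try exact: shift_cycle_indep.
  by move=> m /=; rewrite cd es !periodic_addM.
by rewrite (occ_shift ic.1) oc (occ_shift pa).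
Qed.

(* The exchange lemma on the n-cycle: rotate a gap of the union to the seam;
   a gap exists since otherwise a and b would have the same size. *)
Lemma cycle_exchange n a b : 0 < n -> cycle_indep n a -> cycle_indep n b ->
  occ b 0 n = occ a 0 n + 2 -> exchangeable n a b.
Proof.
move=> n_gt0 ha hb hn; have [[pa ia] [pb ib]] := (ha, hb).
case: (boolP [exists r : 'I_n, gap a b r]) => [/existsP[r gap_r] | ].
  apply: (@exchangeable_rot n a b r.+1) => //.
  apply: exchange_at_gap; try exact: shift_cycle_indep.
  - exact: n_gt0.
  - have e : n.-1 + r.+1 = r + n by lia.
    by rewrite /gap e addSn e -addSn pa pb pa pb.
  - by rewrite (occ_shift pa) (occ_shift pb).
rewrite negb_exists => /forallP ngap.
have := no_gap_balanced pa ia ib (fun m lt_mn => ngap (Ordinal lt_mn)); lia.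
Qed.

Section SetEncoding.

Variable n : nat.
Hypothesis n_gt0 : 0 < n.

Definition cyc (S : {set 'I_n}) (m : nat) := [exists i in S, val i == m %% n].

Definition support (f : nat -> bool) : {set 'I_n} := [set i : 'I_n | f i].

Lemma cyc_periodic S : periodic n (cyc S).
Proof. by move=> m; rewrite /cyc modnDr. Qed.

Lemma cyc_ord S (i : 'I_n) : cyc S i = (i \in S).
Proof.
rewrite /cyc modn_small //; apply/existsP/idP => [[j /andP[jS /eqP/val_inj <-]] // | iS].
by exists i; rewrite iS eqxx.
Qed.

Lemma cyc_support f : periodic n f -> cyc (support f) =1 f.
Proof.
move=> pf m; rewrite -(periodic_mod pf); apply/existsP/idP => [[i]|fm].
  by rewrite inE => /andP[fi /eqP <-].
by exists (Ordinal (ltn_pmod m n_gt0)); rewrite inE fm /=.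
Qed.

Lemma card_occ (S : {set 'I_n}) : #|S| = occ (cyc S) 0 n.
Proof.
rewrite -sum1_card /occ big_mkord big_mkcond /=.
by apply: eq_bigr => i _; rewrite cyc_ord; case: (i \in S).
Qed.

Lemma card_support f : periodic n f -> #|support f| = occ f 0 n.
Proof. by move=> pf; rewrite card_occ; apply: eq_bigr => m _; rewrite cyc_support. Qed.

Lemma support_cycle_indep f : cycle_indep n f -> cycle_indep n (cyc (support f)).
Proof.
by case=> pf if_; split=> [|m]; [exact: cyc_periodic | rewrite !cyc_support //; exact: if_].
Qed.

(* Admissible sets are the independent sets of the n-cycle: the no-adjacency
   condition covers the pairs (u, u+1) with u+1 < n, and the exclusion of
   {1, 2N} covers the pair (n-1, 0). *)
Lemma admissibleP k S : admissible k S <-> #|S| = k /\ cycle_indep n (cyc S).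
Proof.
split.
  case/and3P=> /eqP cardS /forallP no_adj no_ends; split=> //; split; first exact: cyc_periodic.
  move=> m; rewrite -(periodic_mod (cyc_periodic S)) -(periodic_succ_mod (cyc_periodic S)).
  have := ltn_pmod m n_gt0; move: (m %% n) => u lt_un.
  apply/negP => /andP[/existsP[i /andP[iS /eqP ei]] /existsP[j /andP[jS /eqP ej]]].
  rewrite modn_small // in ei; move: lt_un; rewrite leq_eqVlt => /orP[/eqP un | lt_un].
    rewrite un modnn in ej; move/negP: no_ends; apply.
    apply/andP; split; apply/existsP.
      by exists j; rewrite jS ej.
    by exists i; rewrite iS ei; apply/eqP; lia.
  rewrite modn_small // in ej.
  by have /forallP/(_ j) := no_adj i; rewrite iS jS ei ej eqxx.
case=> cardS [_ ind]; apply/and3P; split; first by rewrite cardS.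
  apply/forallP => i; apply/forallP => j; apply/implyP => /andP[iS jS]; apply/eqP => eij.
  by have := ind i; rewrite eij !cyc_ord iS jS.
apply/negP => /andP[/existsP[i /andP[iS /eqP i0]] /existsP[j /andP[jS /eqP jn]]].
have e : n.-1.+1 = 0 + n by rewrite add0n prednK.
by have := ind n.-1; rewrite e (cyc_periodic S) -i0 -jn !cyc_ord iS jS.
Qed.

Lemma admissible_exchange k (A B : {set 'I_n}) :
  admissible k A -> admissible k.+2 B ->
  exists C D : {set 'I_n}, [/\ admissible k.+1 C, admissible k.+1 D
    & forall i, (i \in C) + (i \in D) = (i \in A) + (i \in B)].
Proof.
move=> /admissibleP[cardA indA] /admissibleP[cardB indB].
have hn : occ (cyc B) 0 n = occ (cyc A) 0 n + 2 by rewrite -!card_occ cardA cardB addn2.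
have [c [d [ic id cd oc]]] := cycle_exchange n_gt0 indA indB hn.
have od := occ_add 0 n cd.
exists (support c), (support d); split.
- apply/admissibleP; split; last exact: support_cycle_indep.
  by rewrite card_support ?oc -?card_occ ?cardA //; case: ic.
- apply/admissibleP; split; last exact: support_cycle_indep.
  rewrite card_support; last by case: id.
  by move: od; rewrite oc -!card_occ cardA cardB; lia.
- by move=> i; rewrite !inE -!cyc_ord; exact: cd.
Qed.

End SetEncoding.

Lemma occ_even j : occ (fun m => ~~ odd m) 0 j.*2 = j.
Proof.
elim: j => [|j IH]; first by rewrite /occ big_geq.
by rewrite doubleS /occ !big_nat_recr //= -/(occ _ 0 _) IH odd_double addn0 addn1.
Qed.

Lemma admissible_exists N j : 0 < N -> j <= N ->
  exists S : {set 'I_(2 * N)}, admissible j S.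
Proof.
move=> N_gt0 le_jN; have n_gt0 : 0 < 2 * N by rewrite muln_gt0.
pose f m := ~~ odd m && (m %% (2 * N) < j.*2).
have pf : periodic (2 * N) f by move=> m; rewrite /f modnDr oddD oddM andFb addbF.
exists (support (2 * N) f); apply/(admissibleP n_gt0); split.
  have s : 0 <= j.*2 <= 2 * N by rewrite -mul2n leq_mul2l le_jN orbT.
  rewrite card_support // (occ_cat f s) -[RHS]addn0 -{3}(occ_even j); congr (_ + _).
    by apply: eq_big_nat => m /andP[_ lt_m]; rewrite /f modn_small ?lt_m ?andbT //; lia.
  rewrite /occ big_nat_cond big1 // => m /andP[/andP[le_m lt_m] _].
  by rewrite /f modn_small // ltnNge le_m andbF.
apply: (support_cycle_indep n_gt0); split=> // m.
by rewrite /f oddS; case: (odd m); rewrite ?andbF.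
Qed.

Local Open Scope ring_scope.

Lemma sum_exchange (V : nmodType) n (A B C D : {set 'I_n}) (x : 'I_n -> V) :
  (forall i, (i \in C) + (i \in D) = (i \in A) + (i \in B))%N ->
  \sum_(i in C) x i + \sum_(i in D) x i = \sum_(i in A) x i + \sum_(i in B) x i.
Proof.
move=> hm; rewrite !(big_mkcond (fun i => i \in _)) -!big_split /=.
apply: eq_bigr => i _; move: (hm i).
by case: (i \in A); case: (i \in B); case: (i \in C); case: (i \in D);
  rewrite /= ?add0r ?addr0.
Qed.

Lemma seqmin_le (R : realDomainType) (l : seq R) v : v \in l -> seqmin l <= v.
Proof. by move=> vl; apply: ge_bigmin_seq. Qed.

Lemma seqmin_mem (R : realDomainType) (l : seq R) : l != [::] -> seqmin l \in l.
Proof.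
case: l => [|v l] // _; rewrite /seqmin big_seq.
apply: (big_ind (fun w => w \in v :: l)) => // [|w1 w2 h1 h2]; first exact: mem_head.
by rewrite minEle; case: ifP.
Qed.

Lemma H_le (R : realDomainType) N (x : 'I_(2 * N) -> R) k S :
  (0 < k)%N -> admissible k S -> H x k <= \sum_(i in S) x i.
Proof.
move=> k_gt0 adS; rewrite /H (gtn_eqF k_gt0).
by apply/seqmin_le/map_f; rewrite mem_enum inE.
Qed.

Lemma H_attained (R : realDomainType) N (x : 'I_(2 * N) -> R) k :
  (exists S : {set 'I_(2 * N)}, admissible k S) ->
  exists A, admissible k A /\ H x k = \sum_(i in A) x i.
Proof.
case=> S adS; case: (posnP k) => [k0 | k_gt0].
  have S0 : S = set0 by apply/cards0_eq; case/and3P: adS => /eqP; rewrite k0.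
  by exists S; split=> //; rewrite /H k0 S0 big_set0.
rewrite /H (gtn_eqF k_gt0); set l := map _ _.
have /seqmin_mem : l != [::].
  have Sl : \sum_(i in S) x i \in l by apply: map_f; rewrite mem_enum inE.
  by apply: contraTneq Sl => ->.
by case/mapP => A; rewrite mem_enum inE => adA ->; exists A.
Qed.

Theorem mainTheorem5 (R : realFieldType) (N : nat) (hN : (2 <= N)%N)
    (x : 'I_(2 * N) -> R) (hx : forall i, 0 < x i)
    (k : nat) (hk : (k <= N - 2)%N) :
  H x k + H x k.+2 >= 2 * H x k.+1.
Proof.
have N_gt0 : (0 < N)%N by lia.
have n_gt0 : (0 < 2 * N)%N by lia.
have [le_kN le_k2N] : (k <= N)%N /\ (k.+2 <= N)%N by lia.
have [A [adA ->]] := H_attained x (admissible_exists N_gt0 le_kN).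
have [B [adB ->]] := H_attained x (admissible_exists N_gt0 le_k2N).
have [C [D [adC adD split_AB]]] := admissible_exchange n_gt0 adA adB.
rewrite -(sum_exchange x split_AB) mulr2n mulrDl mul1r.
by apply: lerD; apply: H_le.
Qed.
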